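(* Let $\alpha,\beta\in[0,r]\cap A$ with $\alpha<\beta$, and $I=(\alpha,\beta)$. Let $x\in\mathbf F_I$ with $\mathrm{fix}(x)\cap I\cap A=\varnothing$, and let $C$ be the centralizer of $x$ in $\mathbf F_I$. Let $\phi\colon\mathbf F_I\to\Lambda$ be $y\mapsto(\alpha)y'^{+}$. Then $\phi$ is a group homomorphism and its restriction to $C$ is injective. The same holds for $\phi\colon\mathbf F_I\to\Lambda$, $y\mapsto(\beta)y'^{-}$.
   Context: Maps act on the right. Fix real $r>0$, a subgroup $\Lambda\neq\{1\}$ of $\mathbb R^*_+$, and an additive subgroup $A\subseteq\mathbb R$ with $r\in A$ and $\lambda A\subseteq A$ for $\lambda\in\Lambda$. $\mathbf F=\mathbf F(r,\Lambda,A)$ is the group of homeomorphisms $x\colon[0,r)\to[0,r)$ that are piecewise affine with finitely many breakpoints, all slopes in $\Lambda$, and all breakpoints and their images in $A$; each extends uniquely to a homeomorphism of $[0,r]$. For a permutation $x$, $\mathrm{fix}(x)$ is its fixed point set and $\mathrm{supp}(x)$ its complement. For $S\subseteq[0,r)$, $\mathbf F_S=\{x\in\mathbf F\mid\mathrm{supp}(x)\subseteq S\}$. For a map $g$ affine on an open interval $(\gamma,\delta)$, $(\gamma)g'^{+}$ and $(\delta)g'^{-}$ denote the slope of $g$ there (at $r$ one uses the extension to $[0,r]$). *)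

From Stdlib Require Import Reals.
Open Scope R_scope.

Definition pos_mult_subgroup (Lam : R -> Prop) : Prop :=
  (forall l, Lam l -> 0 < l) /\ Lam 1 /\
  (forall l m, Lam l -> Lam m -> Lam (l * m)) /\
  (forall l, Lam l -> Lam (/ l)).

Definition add_subgroup (A : R -> Prop) : Prop :=
  A 0 /\ (forall a b, A a -> A b -> A (a + b)) /\ (forall a, A a -> A (- a)).

Definition F_params (r : R) (Lam A : R -> Prop) : Prop :=
  0 < r /\ pos_mult_subgroup Lam /\ (exists l, Lam l /\ l <> 1) /\
  add_subgroup A /\ A r /\ (forall l a, Lam l -> A a -> A (l * a)).

(* x : R -> R represents an element of F(r,Lam,A): its restriction to [0,r)
   is a homeomorphism of [0,r) onto itself which is piecewise affine with
   finitely many breakpoints, slopes in Lam, breakpoints and their images in A.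
   The breakpoints are among the subdivision points 0 = t 0 < ... < t n = r;
   x is affine on each closed piece [t i, t (i+1)] (so the value x r is the
   value of the unique extension to [0,r]). *)
Definition inF (r : R) (Lam A : R -> Prop) (x : R -> R) : Prop :=
  (exists (n : nat) (t : nat -> R),
      t 0%nat = 0 /\ t n = r /\
      (forall i, (i < n)%nat -> t i < t (S i)) /\
      (forall i, (i <= n)%nat -> A (t i) /\ A (x (t i))) /\
      (forall i, (i < n)%nat -> exists l, Lam l /\
          forall s, t i <= s <= t (S i) -> x s = x (t i) + l * (s - t i))) /\
  (forall s, 0 <= s < r -> 0 <= x s < r) /\
  (forall s u, 0 <= s < r -> 0 <= u < r -> x s = x u -> s = u) /\
  (forall y, 0 <= y < r -> exists s, 0 <= s < r /\ x s = y).

Definition F_eq (r : R) (x y : R -> R) : Prop :=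
  forall s, 0 <= s < r -> x s = y s.

(* Right action: (t)(xy) = ((t)x)y, so the product xy is  y o x. *)
Definition F_mul (x y : R -> R) : R -> R := fun t => y (x t).

Definition inF_S (r : R) (Lam A : R -> Prop) (S : R -> Prop) (x : R -> R) : Prop :=
  inF r Lam A x /\ (forall t, 0 <= t < r -> x t <> t -> S t).

Definition open_int (a b : R) : R -> Prop := fun t => a < t < b.

Definition rslope (g : R -> R) (a l : R) : Prop :=
  exists eps c, 0 < eps /\ forall s, a < s < a + eps -> g s = c + l * s.

Definition lslope (g : R -> R) (b l : R) : Prop :=
  exists eps c, 0 < eps /\ forall s, b - eps < s < b -> g s = c + l * s.

From Stdlib Require Import Reals Lra Lia Classical.
Open Scope R_scope.

(* Every element of F fixes alpha and beta and is affine on a one-sided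
   neighbourhood of each point, which gives existence of the slopes and,
   by composing two affine germs at a common fixed point, multiplicativity.
   Injectivity is a continuation argument on plain real functions: if y, z
   commute with x, agree just to the right of alpha, and at each point of I
   either x moves the point or y and z are both affine near it, then
   y = z on all of I.  The set of initial segments (alpha, q) on which
   y = z is stable under x and x^-1, so it cannot stop at a point moved by
   x; at a point not moved by x it extends by affinity.  The statements at
   beta follow from those at alpha through the reflection s |-> -s. *)

Definition right_piece (f : R -> R) (a l : R) : Prop :=
  exists d, 0 < d /\ forall s, a <= s <= a + d -> f s = f a + l * (s - a).

Definition left_piece (f : R -> R) (b l : R) : Prop :=
  exists d, 0 < d /\ forall s, b - d <= s <= b -> f s = f b + l * (s - b).

Definition affine_near (f : R -> R) (q : R) : Prop :=
  exists d c m, 0 < d /\ forall s, q - d < s < q + d -> f s = c + m * s.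

Definition agree (y z : R -> R) (a q : R) : Prop :=
  forall s, a < s < q -> y s = z s.

Definition mirror (f : R -> R) : R -> R := fun s => - f (- s).

Lemma lines_equal a1 m1 a2 m2 s1 s2 :
  s1 < s2 -> a1 + m1 * s1 = a2 + m2 * s1 -> a1 + m1 * s2 = a2 + m2 * s2 ->
  m1 = m2 /\ a1 = a2.
Proof.
  intros Hs E1 E2.
  assert (Hm : (m1 - m2) * (s2 - s1) = 0).
  { replace ((m1 - m2) * (s2 - s1))
      with ((a1 + m1 * s2 - (a2 + m2 * s2)) - (a1 + m1 * s1 - (a2 + m2 * s1))) by ring.
    rewrite E1, E2. ring. }
  destruct (Rmult_integral _ _ Hm) as [H | H]; [| lra].
  assert (m1 = m2) as <- by lra. split; [reflexivity | lra].
Qed.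

Lemma rslope_of_right_piece f a l : right_piece f a l -> rslope f a l.
Proof.
  intros [d [Hd Hf]]. exists d, (f a - l * a). split; [exact Hd |].
  intros s Hs. rewrite Hf by lra. ring.
Qed.

Lemma rslope_unique f a l m : right_piece f a l -> rslope f a m -> m = l.
Proof.
  intros [d [Hd Hf]] [e [c [He Hs]]].
  set (h := Rmin d e).
  assert (0 < h) by (apply Rmin_glb_lt; lra).
  pose proof (Rmin_l d e). pose proof (Rmin_r d e). fold h in H0, H1.
  assert (E1 : c + m * (a + h / 3) = (f a - l * a) + l * (a + h / 3))
    by (rewrite <- Hs, Hf by lra; ring).
  assert (E2 : c + m * (a + h / 2) = (f a - l * a) + l * (a + h / 2))
    by (rewrite <- Hs, Hf by lra; ring).
  apply (lines_equal _ _ _ _ (a + h / 3) (a + h / 2) ltac:(lra) E1 E2).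
Qed.

Lemma rslope_ext f g a l : (forall s, f s = g s) -> rslope f a l -> rslope g a l.
Proof.
  intros Hfg [e [c [He Hf]]]. exists e, c. split; [exact He |].
  intros s Hs. rewrite <- Hfg. apply Hf, Hs.
Qed.

Lemma rslope_comp f g a l m :
  right_piece f a l -> f a = a -> 0 < l -> rslope g a m ->
  rslope (F_mul f g) a (l * m).
Proof.
  intros [d [Hd Hf]] Hfa Hl [e [c [He Hg]]].
  assert (0 < e / l) by (apply Rdiv_lt_0_compat; lra).
  exists (Rmin d (e / l)), (c + m * (a - l * a)).
  split; [apply Rmin_glb_lt; lra |].
  intros s Hs. pose proof (Rmin_l d (e / l)). pose proof (Rmin_r d (e / l)).
  unfold F_mul. rewrite Hf, Hfa by lra.
  assert (l * (s - a) < l * (e / l)) by (apply Rmult_lt_compat_l; lra).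
  assert (l * (e / l) = e) by (field; lra).
  assert (0 < l * (s - a)) by (apply Rmult_lt_0_compat; lra).
  rewrite Hg by lra. ring.
Qed.

Lemma right_germs_agree y z a l :
  right_piece y a l -> right_piece z a l -> y a = z a ->
  exists e, 0 < e /\ agree y z a (a + e).
Proof.
  intros [dy [Hdy Hy]] [dz [Hdz Hz]] Hyz.
  exists (Rmin dy dz). split; [apply Rmin_glb_lt; lra |].
  intros s Hs. pose proof (Rmin_l dy dz). pose proof (Rmin_r dy dz).
  rewrite Hy, Hz by lra. congruence.
Qed.

Lemma left_germs_agree y z b l :
  left_piece y b l -> left_piece z b l -> y b = z b ->
  exists e, 0 < e /\ forall s, b - e < s < b -> y s = z s.
Proof.
  intros [dy [Hdy Hy]] [dz [Hdz Hz]] Hyz.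
  exists (Rmin dy dz). split; [apply Rmin_glb_lt; lra |].
  intros s Hs. pose proof (Rmin_l dy dz). pose proof (Rmin_r dy dz).
  rewrite Hy, Hz by lra. congruence.
Qed.

(* The reflection exchanges left and right germs; this transports every
   statement about slopes at the right of a point to the left. *)

Lemma mirror_left_piece f b l : left_piece f b l -> right_piece (mirror f) (- b) l.
Proof.
  intros [d [Hd Hf]]. exists d. split; [exact Hd |].
  intros s Hs. unfold mirror. rewrite Ropp_involutive, (Hf (- s)) by lra. ring.
Qed.

Lemma lslope_mirror f b l : lslope f b l -> rslope (mirror f) (- b) l.
Proof.
  intros [e [c [He Hf]]]. exists e, (- c). split; [exact He |].
  intros s Hs. unfold mirror. rewrite Hf by lra. ring.
Qed.

Lemma rslope_mirror f b l : rslope (mirror f) (- b) l -> lslope f b l.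
Proof.
  intros [e [c [He Hf]]]. exists e, (- c). split; [exact He |].
  intros s Hs. pose proof (Hf (- s) ltac:(lra)) as E.
  unfold mirror in E. rewrite Ropp_involutive in E. lra.
Qed.

Lemma mirror_F_mul f g s : F_mul (mirror f) (mirror g) s = mirror (F_mul f g) s.
Proof. unfold F_mul, mirror. rewrite Ropp_involutive. reflexivity. Qed.

Lemma lslope_of_left_piece f b l : left_piece f b l -> lslope f b l.
Proof.
  intros Hf. apply rslope_mirror, rslope_of_right_piece, mirror_left_piece, Hf.
Qed.

Lemma lslope_unique f b l m : left_piece f b l -> lslope f b m -> m = l.
Proof.
  intros Hf Hm.
  exact (rslope_unique _ _ _ _ (mirror_left_piece _ _ _ Hf) (lslope_mirror _ _ _ Hm)).
Qed.

Lemma lslope_comp f g b l m :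
  left_piece f b l -> f b = b -> 0 < l -> lslope g b m ->
  lslope (F_mul f g) b (l * m).
Proof.
  intros Hf Hfb Hl Hg. apply rslope_mirror.
  apply (rslope_ext (F_mul (mirror f) (mirror g))); [apply mirror_F_mul |].
  apply rslope_comp; [apply mirror_left_piece, Hf | | exact Hl | apply lslope_mirror, Hg].
  unfold mirror. rewrite Ropp_involutive, Hfb. reflexivity.
Qed.

Lemma continuation a b (P : R -> Prop) :
  (exists e, 0 < e /\ forall s, a < s < a + e -> P s) ->
  (forall q, a < q < b -> (forall s, a < s < q -> P s) ->
     exists u, q < u /\ forall s, a < s < u -> P s) ->
  forall s, a < s < b -> P s.
Proof.
  intros [e [He Hinit]] Hstep s0 Hs0.
  set (E := fun u => a < u /\ forall s, a < s < u -> P s).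
  assert (Hfail : forall s, a < s -> ~ P s -> is_upper_bound E s).
  { intros s Hs Hns u [_ Hu]. destruct (Rle_or_lt u s) as [| Hlt]; [assumption |].
    exfalso. apply Hns, Hu. lra. }
  destruct (classic (P s0)) as [| Hns0]; [assumption | exfalso].
  assert (Hstart : E (Rmin (a + e) s0)).
  { pose proof (Rmin_l (a + e) s0).
    split; [apply Rmin_glb_lt; lra | intros s Hs; apply Hinit; lra]. }
  pose proof (Hfail s0 ltac:(lra) Hns0) as Hbound.
  destruct (completeness E (ex_intro _ s0 Hbound) (ex_intro _ _ Hstart)) as [q [Hub Hlub]].
  pose proof (Hub _ Hstart). pose proof (Rmin_glb_lt (a + e) s0 a ltac:(lra) ltac:(lra)).
  pose proof (Hlub s0 Hbound).
  assert (Hbelow : forall s, a < s < q -> P s).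
  { intros s Hs. destruct (classic (P s)) as [| Hns]; [assumption |].
    pose proof (Hlub s (Hfail s ltac:(lra) Hns)). lra. }
  destruct (Hstep q ltac:(lra) Hbelow) as [u [Hqu Hu]].
  assert (Hu' : E u) by (split; [lra | exact Hu]).
  pose proof (Hub u Hu'). lra.
Qed.

Lemma affine_extend y z a q :
  a < q -> affine_near y q -> affine_near z q -> agree y z a q ->
  exists u, q < u /\ agree y z a u.
Proof.
  intros Haq [dy [cy [my [Hdy Hy]]]] [dz [cz [mz [Hdz Hz]]]] Hag.
  set (h := Rmin (Rmin dy dz) (q - a)).
  assert (0 < h) by (repeat apply Rmin_glb_lt; lra).
  pose proof (Rmin_l (Rmin dy dz) (q - a)). pose proof (Rmin_r (Rmin dy dz) (q - a)).
  pose proof (Rmin_l dy dz). pose proof (Rmin_r dy dz). fold h in H0, H1.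
  assert (E1 : cy + my * (q - h / 2) = cz + mz * (q - h / 2))
    by (rewrite <- Hy, <- Hz by lra; apply Hag; lra).
  assert (E2 : cy + my * (q - h / 4) = cz + mz * (q - h / 4))
    by (rewrite <- Hy, <- Hz by lra; apply Hag; lra).
  destruct (lines_equal _ _ _ _ (q - h / 2) (q - h / 4) ltac:(lra) E1 E2) as [-> ->].
  exists (q + h). split; [lra |]. intros s Hs.
  destruct (Rlt_or_le s q); [apply Hag; lra |]. rewrite Hy, Hz by lra. reflexivity.
Qed.

(* The abstract situation of the injectivity argument on (a, b): x is an
   increasing bijection of (a, b), "y = z" is invariant under x (this is
   what commuting with x gives), and wherever x fixes a point, y and z are
   affine near it. *)
Record agreement_setting (a b : R) (x y z : R -> R) : Prop := {
  setting_incr : forall s u, a < s -> s < u -> u < b -> x s < x u;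
  setting_range : forall s, a < s < b -> a < x s < b;
  setting_onto : forall v, a < v < b -> exists u, a < u < b /\ x u = v;
  setting_commute : forall s, a < s < b -> (y s = z s <-> y (x s) = z (x s));
  setting_local : forall q, a < q < b ->
    x q <> q \/ (affine_near y q /\ affine_near z q) }.

Section Agreement.

Variables (a b : R) (x y z : R -> R).
Hypothesis Hset : agreement_setting a b x y z.

Lemma agree_forward q : a < q < b -> agree y z a q -> agree y z a (x q).
Proof.
  intros Hq Hag v Hv.
  pose proof Hset as [Hincr Hrange Honto Hcomm _].
  pose proof (Hrange q Hq).
  destruct (Honto v ltac:(lra)) as [u [Hu Hxu]].
  assert (Huq : u < q).
  { destruct (Rlt_or_le u q) as [| Hle]; [assumption | exfalso].
    destruct (Rle_lt_or_eq_dec q u Hle) as [Hlt | <-]; [| lra].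
    pose proof (Hincr q u ltac:(lra) Hlt ltac:(lra)). lra. }
  rewrite <- Hxu. apply (proj1 (Hcomm u Hu)), Hag. lra.
Qed.

Lemma agree_backward u : a < u < b -> agree y z a (x u) -> agree y z a u.
Proof.
  intros Hu Hag s Hs.
  pose proof Hset as [Hincr Hrange _ Hcomm _].
  pose proof (Hincr s u ltac:(lra) ltac:(lra) ltac:(lra)).
  pose proof (Hrange s ltac:(lra)).
  apply (proj2 (Hcomm s ltac:(lra))), Hag. lra.
Qed.

Lemma agree_extend q : a < q < b -> agree y z a q -> exists u, q < u /\ agree y z a u.
Proof.
  intros Hq Hag.
  pose proof Hset as [Hincr Hrange Honto _ Hlocal].
  destruct (Hlocal q Hq) as [Hmoved | [Hy Hz]].
  2: exact (affine_extend y z a q ltac:(lra) Hy Hz Hag).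
  pose proof (Hrange q Hq).
  destruct (Rlt_or_le q (x q)) as [Hup | Hdown].
  - exists (x q). split; [exact Hup | apply agree_forward; assumption].
  - (* x q < q: a preimage u of a point between x q and q lies beyond q *)
    assert (Hxq : x q < q) by (destruct Hdown; [assumption | congruence]).
    destruct (Honto ((x q + q) / 2) ltac:(lra)) as [u [Hu Hxu]].
    assert (Hqu : q < u).
    { destruct (Rlt_or_le q u) as [| Hle]; [assumption | exfalso].
      destruct (Rle_lt_or_eq_dec u q Hle) as [Hlt | ->]; [| lra].
      pose proof (Hincr u q ltac:(lra) Hlt ltac:(lra)). lra. }
    exists u. split; [exact Hqu |].
    apply agree_backward; [exact Hu |]. rewrite Hxu.
    intros s Hs. apply Hag. lra.
Qed.

Theorem agree_from_left : (exists e, 0 < e /\ agree y z a (a + e)) -> agree y z a b.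
Proof.
  intros Hinit. exact (continuation a b (fun s => y s = z s) Hinit agree_extend).
Qed.

End Agreement.

Lemma affine_near_mirror f q : affine_near f q -> affine_near (mirror f) (- q).
Proof.
  intros [d [c [m [Hd Hf]]]]. exists d, (- c), m. split; [exact Hd |].
  intros s Hs. unfold mirror. rewrite Hf by lra. ring.
Qed.

Lemma mirror_setting a b x y z :
  agreement_setting a b x y z ->
  agreement_setting (- b) (- a) (mirror x) (mirror y) (mirror z).
Proof.
  intros [Hincr Hrange Honto Hcomm Hlocal]. constructor.
  - intros s u H1 H2 H3. unfold mirror.
    pose proof (Hincr (- u) (- s) ltac:(lra) ltac:(lra) ltac:(lra)). lra.
  - intros s Hs. unfold mirror. pose proof (Hrange (- s) ltac:(lra)). lra.
  - intros v Hv. destruct (Honto (- v) ltac:(lra)) as [u [Hu Hxu]].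
    exists (- u). split; [lra |]. unfold mirror. rewrite Ropp_involutive, Hxu. ring.
  - intros s Hs. unfold mirror. rewrite Ropp_involutive.
    destruct (Hcomm (- s) ltac:(lra)) as [Hfw Hbw].
    split; intro E; [assert (y (x (- s)) = z (x (- s))) by (apply Hfw; lra)
                    | assert (y (- s) = z (- s)) by (apply Hbw; lra)]; lra.
  - intros q Hq. destruct (Hlocal (- q) ltac:(lra)) as [Hm | [Hy Hz]].
    + left. unfold mirror. intro E. apply Hm. lra.
    + right. rewrite <- (Ropp_involutive q).
      split; apply affine_near_mirror; assumption.
Qed.

Corollary agree_from_right a b x y z :
  agreement_setting a b x y z ->
  (exists e, 0 < e /\ forall s, b - e < s < b -> y s = z s) ->
  agree y z a b.
Proof.
  intros Hset [e [He Hinit]] s Hs.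
  assert (Hm : agree (mirror y) (mirror z) (- b) (- a)).
  { apply (agree_from_left _ _ (mirror x)); [apply mirror_setting, Hset |].
    exists e. split; [exact He |].
    intros u Hu. unfold mirror. rewrite Hinit by lra. reflexivity. }
  pose proof (Hm (- s) ltac:(lra)) as E.
  unfold mirror in E. rewrite Ropp_involutive in E. lra.
Qed.

Lemma subdivision_piece_right (t : nat -> R) (q : R) k :
  t 0%nat <= q -> q < t k -> exists i, (i < k)%nat /\ t i <= q < t (S i).
Proof.
  induction k as [| k IH]; intros H0 Hq; [lra |].
  destruct (Rlt_or_le q (t k)) as [H | H].
  - destruct (IH H0 H) as [i [Hi Hti]]. exists i. split; [lia | exact Hti].
  - exists k. split; [lia | lra].
Qed.

Lemma subdivision_piece_left (t : nat -> R) (q : R) k :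
  t 0%nat < q -> q <= t k -> exists i, (i < k)%nat /\ t i < q <= t (S i).
Proof.
  induction k as [| k IH]; intros H0 Hq; [lra |].
  destruct (Rle_or_lt q (t k)) as [H | H].
  - destruct (IH H0 H) as [i [Hi Hti]]. exists i. split; [lia | exact Hti].
  - exists k. split; [lia | lra].
Qed.

Lemma increasing_of_pieces (Lam : R -> Prop) (f : R -> R) n t :
  (forall l, Lam l -> 0 < l) ->
  (forall i, (i < n)%nat -> exists l, Lam l /\
     forall s, t i <= s <= t (S i) -> f s = f (t i) + l * (s - t i)) ->
  forall k, (k <= n)%nat -> forall s u, t 0%nat <= s -> s < u -> u <= t k -> f s < f u.
Proof.
  intros Hpos Hpc k. induction k as [| k IH]; intros Hk s u Hs Hsu Hu; [lra |].
  destruct (Rle_or_lt u (t k)) as [H | H]; [apply IH; (lia || lra) |].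
  destruct (Hpc k ltac:(lia)) as [l [Hl Hf]]. pose proof (Hpos l Hl).
  assert (Hfu : f u = f (t k) + l * (u - t k)) by (apply Hf; lra).
  destruct (Rle_or_lt (t k) s) as [H2 | H2].
  - rewrite Hfu, (Hf s) by lra. apply Rplus_lt_compat_l, Rmult_lt_compat_l; lra.
  - apply Rlt_trans with (f (t k)); [apply IH; (lia || lra) |].
    assert (0 < l * (u - t k)) by (apply Rmult_lt_0_compat; lra). lra.
Qed.

Lemma F_incr r Lam A f : (forall l, Lam l -> 0 < l) -> inF r Lam A f ->
  forall s u, 0 <= s -> s < u -> u <= r -> f s < f u.
Proof.
  intros Hpos [[n [t [H0 [Hn [_ [_ Hpc]]]]]] _] s u H1 H2 H3.
  apply (increasing_of_pieces Lam f n t Hpos Hpc n (le_n n)); congruence || lra.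
Qed.

Lemma F_nondecr r Lam A f : (forall l, Lam l -> 0 < l) -> inF r Lam A f ->
  forall s u, 0 <= s -> s <= u -> u <= r -> f s <= f u.
Proof.
  intros Hpos Hf s u H1 H2 H3. destruct (Rle_lt_or_eq_dec s u H2) as [Hlt | <-].
  - left. apply (F_incr r Lam A f Hpos Hf); assumption.
  - right. reflexivity.
Qed.

Lemma F_right_piece r Lam A f q : inF r Lam A f -> 0 <= q < r ->
  exists l, Lam l /\ right_piece f q l.
Proof.
  intros [[n [t [H0 [Hn [_ [_ Hpc]]]]]] _] Hq.
  destruct (subdivision_piece_right t q n ltac:(rewrite H0; lra) ltac:(rewrite Hn; lra))
    as [i [Hi Hti]].
  destruct (Hpc i Hi) as [l [Hl Hf]].
  exists l. split; [exact Hl |]. exists (t (S i) - q). split; [lra |].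
  intros s Hs. rewrite (Hf s), (Hf q) by lra. ring.
Qed.

Lemma F_left_piece r Lam A f q : inF r Lam A f -> 0 < q <= r ->
  exists l, Lam l /\ left_piece f q l.
Proof.
  intros [[n [t [H0 [Hn [_ [_ Hpc]]]]]] _] Hq.
  destruct (subdivision_piece_left t q n ltac:(rewrite H0; lra) ltac:(rewrite Hn; lra))
    as [i [Hi Hti]].
  destruct (Hpc i Hi) as [l [Hl Hf]].
  exists l. split; [exact Hl |]. exists (q - t i). split; [lra |].
  intros s Hs. rewrite (Hf s), (Hf q) by lra. ring.
Qed.

Lemma F_breakpoint r Lam A f q : inF r Lam A f -> 0 <= q < r -> A q \/ affine_near f q.
Proof.
  intros [[n [t [H0 [Hn [_ [HA Hpc]]]]]] _] Hq.
  destruct (subdivision_piece_right t q n ltac:(rewrite H0; lra) ltac:(rewrite Hn; lra))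
    as [i [Hi Hti]].
  destruct (Req_dec (t i) q) as [<- | Hne]; [left; apply (HA i); lia | right].
  destruct (Hpc i Hi) as [l [_ Hf]].
  set (d := Rmin (q - t i) (t (S i) - q)).
  exists d, (f (t i) - l * t i), l. split; [apply Rmin_glb_lt; lra |].
  intros s Hs. pose proof (Rmin_l (q - t i) (t (S i) - q)).
  pose proof (Rmin_r (q - t i) (t (S i) - q)). fold d in H, H1.
  rewrite Hf by lra. ring.
Qed.

Lemma F_fixes_right_end r Lam A f : 0 < r -> (forall l, Lam l -> 0 < l) ->
  inF r Lam A f -> f r = r.
Proof.
  intros Hr Hpos Hf.
  pose proof (F_incr r Lam A f Hpos Hf) as Hincr.
  destruct (F_left_piece r Lam A f r Hf ltac:(lra)) as [l [Hl [d [Hd Hfl]]]].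
  pose proof (Hpos l Hl).
  destruct Hf as [_ [Hrange [_ Hsurj]]].
  destruct (Rtotal_order (f r) r) as [Hlt | [Heq | Hgt]]; [exfalso | exact Heq | exfalso].
  - (* f r < r would be attained at some s < r, against monotonicity *)
    pose proof (Hincr 0 r ltac:(lra) Hr ltac:(lra)). pose proof (Hrange 0 ltac:(lra)).
    destruct (Hsurj (f r) ltac:(lra)) as [s [Hs Hfs]].
    pose proof (Hincr s r ltac:(lra) ltac:(lra) ltac:(lra)). lra.
  - (* f r > r: points just below r would be sent above r *)
    set (h := Rmin (Rmin d (r / 2)) ((f r - r) / (2 * l))).
    pose proof (Rmin_l (Rmin d (r / 2)) ((f r - r) / (2 * l))).
    pose proof (Rmin_r (Rmin d (r / 2)) ((f r - r) / (2 * l))).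
    pose proof (Rmin_l d (r / 2)). pose proof (Rmin_r d (r / 2)). fold h in H0, H1.
    assert (0 < h) by (repeat apply Rmin_glb_lt; try apply Rdiv_lt_0_compat; lra).
    assert (l * h <= l * ((f r - r) / (2 * l))) by (apply Rmult_le_compat_l; lra).
    assert (l * ((f r - r) / (2 * l)) = (f r - r) / 2) by (field; lra).
    pose proof (Hfl (r - h) ltac:(lra)). pose proof (Hrange (r - h) ltac:(lra)). lra.
Qed.

Lemma F_S_fixes_outside r Lam A a b f : inF_S r Lam A (open_int a b) f ->
  forall s, 0 <= s < r -> ~ (a < s < b) -> f s = s.
Proof.
  intros [_ Hsupp] s Hs Hout. destruct (Req_dec (f s) s) as [| Hne]; [assumption |].
  exfalso. apply Hout, (Hsupp s Hs Hne).
Qed.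

Lemma F_S_endpoints r Lam A a b f : (forall l, Lam l -> 0 < l) ->
  0 <= a -> a < b -> b <= r -> inF_S r Lam A (open_int a b) f -> f a = a /\ f b = b.
Proof.
  intros Hpos Ha Hab Hbr Hf. split.
  - apply (F_S_fixes_outside r Lam A a b f Hf); lra.
  - destruct (Rle_lt_or_eq_dec b r Hbr) as [Hlt | ->].
    + apply (F_S_fixes_outside r Lam A a b f Hf); lra.
    + apply (F_fixes_right_end r Lam A f ltac:(lra) Hpos (proj1 Hf)).
Qed.

Lemma F_eq_of_agree r Lam A a b y z :
  inF_S r Lam A (open_int a b) y -> inF_S r Lam A (open_int a b) z ->
  agree y z a b -> F_eq r y z.
Proof.
  intros Hy Hz Hag s Hs. destruct (classic (a < s < b)) as [Hin | Hout]; [apply Hag, Hin |].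
  rewrite (F_S_fixes_outside r Lam A a b y Hy s Hs Hout).
  rewrite (F_S_fixes_outside r Lam A a b z Hz s Hs Hout). reflexivity.
Qed.

Lemma centralizer_setting r Lam A alpha beta x :
  (forall l, Lam l -> 0 < l) -> 0 <= alpha -> alpha < beta -> beta <= r ->
  inF_S r Lam A (open_int alpha beta) x ->
  (forall t, open_int alpha beta t -> A t -> x t <> t) ->
  forall y z, inF_S r Lam A (open_int alpha beta) y -> inF_S r Lam A (open_int alpha beta) z ->
  F_eq r (F_mul x y) (F_mul y x) -> F_eq r (F_mul x z) (F_mul z x) ->
  agreement_setting alpha beta x y z.
Proof.
  intros Hpos Ha0 Hab Hbr Hx Hnofix y z Hy Hz Hcy Hcz.
  destruct (F_S_endpoints r Lam A alpha beta x Hpos Ha0 Hab Hbr Hx) as [Hxa Hxb].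
  pose proof (F_incr r Lam A x Hpos (proj1 Hx)) as Hincr.
  pose proof (F_nondecr r Lam A x Hpos (proj1 Hx)) as Hle.
  destruct Hx as [[_ [_ [Hxinj Hxonto]]] _].
  pose proof (proj1 (proj2 (proj1 Hy))) as Hyrange.
  pose proof (proj1 (proj2 (proj1 Hz))) as Hzrange.
  constructor.
  - intros s u H1 H2 H3. apply Hincr; lra.
  - intros s Hs. pose proof (Hincr alpha s ltac:(lra) ltac:(lra) ltac:(lra)).
    pose proof (Hincr s beta ltac:(lra) ltac:(lra) ltac:(lra)). lra.
  - intros v Hv. destruct (Hxonto v ltac:(lra)) as [u [Hu Hxu]].
    exists u. split; [| exact Hxu].
    destruct (Rle_or_lt u alpha) as [H | H];
      [pose proof (Hle u alpha ltac:(lra) H ltac:(lra)); lra |].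
    destruct (Rle_or_lt beta u) as [H' | H'];
      [pose proof (Hle beta u ltac:(lra) H' ltac:(lra)); lra | lra].
  - (* y = z at s iff at x s: commutation plus injectivity of x *)
    intros s Hs. unfold F_eq, F_mul in Hcy, Hcz.
    rewrite (Hcy s), (Hcz s) by lra. split; intro E; [congruence |].
    apply Hxinj; [apply Hyrange; lra | apply Hzrange; lra | exact E].
  - intros q Hq. destruct (classic (A q)) as [HA | HnA]; [left; apply Hnofix; assumption |].
    right.
    destruct (F_breakpoint r Lam A y q (proj1 Hy) ltac:(lra)) as [| Hay]; [contradiction |].
    destruct (F_breakpoint r Lam A z q (proj1 Hz) ltac:(lra)) as [| Haz]; [contradiction |].
    split; assumption.
Qed.

Lemma rslope_defined r Lam A f a : inF r Lam A f -> 0 <= a < r ->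
  exists l, Lam l /\ rslope f a l.
Proof.
  intros Hf Ha. destruct (F_right_piece r Lam A f a Hf Ha) as [l [Hl Hp]].
  exists l. split; [exact Hl | apply rslope_of_right_piece, Hp].
Qed.

Lemma rslope_mul r Lam A y z a ly lz : (forall l, Lam l -> 0 < l) ->
  inF r Lam A y -> 0 <= a < r -> y a = a -> rslope y a ly -> rslope z a lz ->
  rslope (F_mul y z) a (ly * lz).
Proof.
  intros Hpos Hy Ha Hya Hly Hlz.
  destruct (F_right_piece r Lam A y a Hy Ha) as [l [Hl Hp]].
  rewrite (rslope_unique _ _ _ _ Hp Hly).
  apply rslope_comp; [exact Hp | exact Hya | apply Hpos, Hl | exact Hlz].
Qed.

Lemma rslope_germs r Lam A y z a l :
  inF r Lam A y -> inF r Lam A z -> 0 <= a < r -> y a = z a ->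
  rslope y a l -> rslope z a l -> exists e, 0 < e /\ agree y z a (a + e).
Proof.
  intros Hy Hz Ha Hyz Hly Hlz.
  destruct (F_right_piece r Lam A y a Hy Ha) as [ly [_ Hpy]].
  destruct (F_right_piece r Lam A z a Hz Ha) as [lz [_ Hpz]].
  rewrite <- (rslope_unique _ _ _ _ Hpy Hly) in Hpy.
  rewrite <- (rslope_unique _ _ _ _ Hpz Hlz) in Hpz.
  exact (right_germs_agree y z a l Hpy Hpz Hyz).
Qed.

Lemma lslope_defined r Lam A f b : inF r Lam A f -> 0 < b <= r ->
  exists l, Lam l /\ lslope f b l.
Proof.
  intros Hf Hb. destruct (F_left_piece r Lam A f b Hf Hb) as [l [Hl Hp]].
  exists l. split; [exact Hl | apply lslope_of_left_piece, Hp].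
Qed.

Lemma lslope_mul r Lam A y z b ly lz : (forall l, Lam l -> 0 < l) ->
  inF r Lam A y -> 0 < b <= r -> y b = b -> lslope y b ly -> lslope z b lz ->
  lslope (F_mul y z) b (ly * lz).
Proof.
  intros Hpos Hy Hb Hyb Hly Hlz.
  destruct (F_left_piece r Lam A y b Hy Hb) as [l [Hl Hp]].
  rewrite (lslope_unique _ _ _ _ Hp Hly).
  apply lslope_comp; [exact Hp | exact Hyb | apply Hpos, Hl | exact Hlz].
Qed.

Lemma lslope_germs r Lam A y z b l :
  inF r Lam A y -> inF r Lam A z -> 0 < b <= r -> y b = z b ->
  lslope y b l -> lslope z b l -> exists e, 0 < e /\ forall s, b - e < s < b -> y s = z s.
Proof.
  intros Hy Hz Hb Hyz Hly Hlz.
  destruct (F_left_piece r Lam A y b Hy Hb) as [ly [_ Hpy]].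
  destruct (F_left_piece r Lam A z b Hz Hb) as [lz [_ Hpz]].
  rewrite <- (lslope_unique _ _ _ _ Hpy Hly) in Hpy.
  rewrite <- (lslope_unique _ _ _ _ Hpz Hlz) in Hpz.
  exact (left_germs_agree y z b l Hpy Hpz Hyz).
Qed.

Theorem lemma4p1 (r : R) (Lam A : R -> Prop) (alpha beta : R) (x : R -> R) :
  F_params r Lam A ->
  0 <= alpha -> beta <= r -> A alpha -> A beta -> alpha < beta ->
  inF_S r Lam A (open_int alpha beta) x ->
  (forall t, open_int alpha beta t -> A t -> x t <> t) ->
  (* phi : y |-> (alpha) y'^+ *)
  ((forall y, inF_S r Lam A (open_int alpha beta) y ->
      exists l, Lam l /\ rslope y alpha l) /\
   (forall y z ly lz,
      inF_S r Lam A (open_int alpha beta) y ->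
      inF_S r Lam A (open_int alpha beta) z ->
      rslope y alpha ly -> rslope z alpha lz ->
      rslope (F_mul y z) alpha (ly * lz)) /\
   (forall y z l,
      inF_S r Lam A (open_int alpha beta) y ->
      inF_S r Lam A (open_int alpha beta) z ->
      F_eq r (F_mul x y) (F_mul y x) ->
      F_eq r (F_mul x z) (F_mul z x) ->
      rslope y alpha l -> rslope z alpha l ->
      F_eq r y z)) /\
  (* phi : y |-> (beta) y'^- *)
  ((forall y, inF_S r Lam A (open_int alpha beta) y ->
      exists l, Lam l /\ lslope y beta l) /\
   (forall y z ly lz,
      inF_S r Lam A (open_int alpha beta) y ->
      inF_S r Lam A (open_int alpha beta) z ->
      lslope y beta ly -> lslope z beta lz ->
      lslope (F_mul y z) beta (ly * lz)) /\
   (forall y z l,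
      inF_S r Lam A (open_int alpha beta) y ->
      inF_S r Lam A (open_int alpha beta) z ->
      F_eq r (F_mul x y) (F_mul y x) ->
      F_eq r (F_mul x z) (F_mul z x) ->
      lslope y beta l -> lslope z beta l ->
      F_eq r y z)).
Proof.
  intros Hpar Ha0 Hbr _ _ Hab Hx Hnofix.
  destruct Hpar as [_ [[Hpos _] _]].
  assert (Hends : forall y, inF_S r Lam A (open_int alpha beta) y ->
            y alpha = alpha /\ y beta = beta)
    by (intros y Hy; exact (F_S_endpoints r Lam A alpha beta y Hpos Ha0 Hab Hbr Hy)).
  assert (Hcent := centralizer_setting r Lam A alpha beta x Hpos Ha0 Hab Hbr Hx Hnofix).
  split; (split; [| split]).
  - intros y Hy. exact (rslope_defined r Lam A y alpha (proj1 Hy) ltac:(lra)).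
  - intros y z ly lz Hy Hz.
    apply (rslope_mul r Lam A); [exact Hpos | exact (proj1 Hy) | lra | apply Hends, Hy].
  - intros y z l Hy Hz Hcy Hcz Hly Hlz.
    apply (F_eq_of_agree r Lam A alpha beta y z Hy Hz).
    apply (agree_from_left _ _ x); [exact (Hcent y z Hy Hz Hcy Hcz) |].
    apply (rslope_germs r Lam A y z alpha l (proj1 Hy) (proj1 Hz)); try assumption; [lra |].
    rewrite (proj1 (Hends y Hy)), (proj1 (Hends z Hz)). reflexivity.
  - intros y Hy. exact (lslope_defined r Lam A y beta (proj1 Hy) ltac:(lra)).
  - intros y z ly lz Hy Hz.
    apply (lslope_mul r Lam A); [exact Hpos | exact (proj1 Hy) | lra | apply Hends, Hy].
  - intros y z l Hy Hz Hcy Hcz Hly Hlz.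
    apply (F_eq_of_agree r Lam A alpha beta y z Hy Hz).
    apply (agree_from_right _ _ x); [exact (Hcent y z Hy Hz Hcy Hcz) |].
    apply (lslope_germs r Lam A y z beta l (proj1 Hy) (proj1 Hz)); try assumption; [lra |].
    rewrite (proj2 (Hends y Hy)), (proj2 (Hends z Hz)). reflexivity.
Qed.
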